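(* Let $Z=\prod_{c=1}^C Z_c$ with each $Z_c$ finite, let $Z^{\text{train}}\subseteq Z$, and let $z\mapsto x(z)$ be a representation whose kernel $K$ is compositionally structured. Let $f$ be a kernel model of the form $f(x)=\sum_{z^{\text{tr}}\in Z^{\text{train}}} a_{z^{\text{tr}}}K(x,x(z^{\text{tr}}))$ with arbitrary real coefficients $a_{z^{\text{tr}}}$. For $z\in Z$ define $$\mathrm{Conj}(z\mid Z^{\text{train}}):=\{J\subseteq\{1,\dots,C\}:\ \text{there is } z^{\text{tr}}\in Z^{\text{train}} \text{ with } z_c=z^{\text{tr}}_c \text{ for all } c\in J\}.$$ Then there exist functions $f_J:\prod_{c\in J}Z_c\to\mathbb{R}$, for $J\subseteq\{1,\dots,C\}$, such that for every input $x$ representing any $z\in Z$, $$f(x)=\sum_{J\in\mathrm{Conj}(z\mid Z^{\text{train}})} f_J(z_J),\qquad z_J:=(z_c)_{c\in J}.$$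
   Context: A representation $z\mapsto x(z)\in\mathbb{R}^d$ (or more generally a feature map with kernel $K(x,x')=\phi(x)^T\phi(x')$) is compositionally structured iff $K(x(z),x(z'))$ depends only on the number of components $c$ with $z_c=z'_c$. A kernel model trained on inputs representing $Z^{\text{train}}$ is written in dual form as a linear combination of the kernel evaluated against the training inputs. *)

From HB Require Import structures.
From mathcomp Require Import all_boot all_order all_algebra.
From mathcomp Require Import reals.
Set Implicit Arguments. Unset Strict Implicit. Unset Printing Implicit Defensive.
Import Order.TTheory GRing.Theory Num.Theory.
Local Open Scope ring_scope.

Definition prodZ (C : nat) (Zc : 'I_C -> finType) : finType :=
  {dffun forall c : 'I_C, Zc c}.

Definition feat_kernel (R : realType) (X : Type) (d : nat)
  (phi : X -> 'cV[R]_d) (x x' : X) : R :=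
  ((phi x)^T *m phi x') 0 0.

Definition nagree (C : nat) (Zc : 'I_C -> finType) (z z' : prodZ Zc) : nat :=
  #|[set c : 'I_C | z c == z' c]|.

Definition comp_structured (R : realType) (C : nat) (Zc : 'I_C -> finType)
  (X : Type) (K : X -> X -> R) (xrep : prodZ Zc -> X) : Prop :=
  exists g : nat -> R, forall z z' : prodZ Zc, K (xrep z) (xrep z') = g (nagree z z').

Definition kernel_model (R : realType) (C : nat) (Zc : 'I_C -> finType)
  (X : Type) (K : X -> X -> R) (xrep : prodZ Zc -> X)
  (Ztrain : {set prodZ Zc}) (a : prodZ Zc -> R) (x : X) : R :=
  \sum_(zt in Ztrain) a zt * K x (xrep zt).

Definition Conj (C : nat) (Zc : 'I_C -> finType) (z : prodZ Zc)
  (Ztrain : {set prodZ Zc}) : {set {set 'I_C}} :=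
  [set J : {set 'I_C} | [exists zt in Ztrain, [forall c in J, z c == zt c]]].

Definition subprod (C : nat) (Zc : 'I_C -> finType) (J : {set 'I_C}) : Type :=
  forall c : {c : 'I_C | c \in J}, Zc (sval c).

Definition restrict (C : nat) (Zc : 'I_C -> finType) (J : {set 'I_C})
  (z : prodZ Zc) : subprod Zc J := fun c => z (sval c).

From HB Require Import structures.
From mathcomp Require Import all_boot all_order all_algebra.
From mathcomp Require Import reals.
Set Implicit Arguments. Unset Strict Implicit. Unset Printing Implicit Defensive.
Import Order.TTheory GRing.Theory Num.Theory.
Local Open Scope ring_scope.

(* Write the kernel profile as a binomial transform, g n = sum_i C(n,i) h i;
   counting subsets by size this says g #|A| = sum_(J \subset A) h #|J|.
   Applied to the agreement set A of z and a training point zt, every term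
   K(x(z), x(zt)) splits into contributions h #|J| of the sets J on which z
   and zt agree. Exchanging the sums, the contribution of J depends only on
   z_J, and it is an empty sum unless J is in Conj(z | Ztrain). *)

Lemma binomial_transform_onto (V : zmodType) (g : nat -> V) (m : nat) :
  exists h : nat -> V,
    forall n, (n <= m)%N -> g n = \sum_(i < n.+1) h i *+ 'C(n, i).
Proof.
elim: m => [|m [h gE]].
  by exists (fun=> g 0%N) => n; rewrite leqn0 => /eqP ->; rewrite big_ord1.
pose h' i := if i == m.+1 then g m.+1 - \sum_(i < m.+1) h i *+ 'C(m.+1, i)
             else h i.
have h'E i : (i < m.+1)%N -> h' i = h i by move=> ?; rewrite /h' ltn_eqF.
exists h' => n; rewrite leq_eqVlt ltnS => /predU1P [->|le_nm].
  rewrite big_ord_recr /= binn mulr1n {2}/h' eqxx.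
  by under eq_bigr => i _ do rewrite h'E //; rewrite addrC subrK.
rewrite gE //; apply: eq_bigr => i _.
by rewrite h'E // (leq_trans (ltn_ord i)).
Qed.

Lemma sum_subsets_by_card (V : nmodType) (T : finType) (h : nat -> V)
    (A : {set T}) :
  \sum_(J : {set T} | J \subset A) h #|J| = \sum_(i < #|A|.+1) h i *+ 'C(#|A|, i).
Proof.
rewrite (partition_big (fun J : {set T} => inord #|J| : 'I_#|A|.+1) xpredT) //=.
apply: eq_bigr => i _; rewrite -cards_draws -sumr_const.
apply: eq_big => [J|J /andP [JA /eqP <-]]; last first.
  by rewrite inordK // ltnS subset_leq_card.
rewrite inE; case JA: (J \subset A) => //=.
by rewrite -val_eqE /= inordK // ltnS subset_leq_card.
Qed.

Lemma card_subsets_transform (V : zmodType) (T : finType) (g : nat -> V) :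
  exists h : nat -> V,
    forall A : {set T}, g #|A| = \sum_(J : {set T} | J \subset A) h #|J|.
Proof.
have [h gE] := binomial_transform_onto g #|T|.
by exists h => A; rewrite sum_subsets_by_card gE // max_card.
Qed.

Section Conjunctions.
Variables (C : nat) (Zc : 'I_C -> finType).

Definition extends (J : {set 'I_C}) (zt : prodZ Zc) (y : subprod Zc J) : bool :=
  [forall c : {c : 'I_C | c \in J}, zt (sval c) == y c].

Lemma extends_restrict (J : {set 'I_C}) (z zt : prodZ Zc) :
  extends zt (@restrict C Zc J z) = (J \subset [set c | z c == zt c]).
Proof.
apply/forallP/subsetP => [zJ c cJ|Jz [c cJ]].
  by rewrite inE eq_sym; apply: (zJ (exist _ c cJ)).
by have := Jz c cJ; rewrite inE eq_sym.
Qed.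

Lemma agree_subset_Conj (Ztrain : {set prodZ Zc}) (z zt : prodZ Zc)
    (J : {set 'I_C}) :
  zt \in Ztrain -> J \subset [set c | z c == zt c] -> J \in Conj z Ztrain.
Proof.
move=> ztT /subsetP Jz; rewrite inE; apply/existsP; exists zt.
by rewrite ztT; apply/forall_inP => c /Jz; rewrite inE.
Qed.

End Conjunctions.

Theorem theorem1 (R : realType) (C : nat) (Zc : 'I_C -> finType)
  (Ztrain : {set prodZ Zc}) (X : Type) (d : nat) (phi : X -> 'cV[R]_d)
  (xrep : prodZ Zc -> X)
  (hcomp : comp_structured (feat_kernel phi) xrep)
  (a : prodZ Zc -> R) :
  exists fJ : forall J : {set 'I_C}, subprod Zc J -> R,
    forall (z : prodZ Zc) (x : X), x = xrep z ->
      kernel_model (feat_kernel phi) xrep Ztrain a x =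
      \sum_(J in Conj z Ztrain) fJ J (@restrict C Zc J z).
Proof.
have [g Kg] := hcomp.
have [h gE] := card_subsets_transform 'I_C g.
exists (fun (J : {set 'I_C}) (y : subprod Zc J) =>
  h #|J| * \sum_(zt in Ztrain | extends zt y) a zt).
move=> z _ ->; rewrite /kernel_model.
under eq_bigr => zt _ do rewrite Kg /nagree gE mulr_sumr.
rewrite (exchange_big_dep (mem (Conj z Ztrain))) /=; last exact: agree_subset_Conj.
apply: eq_bigr => J _; rewrite mulr_sumr.
by apply: eq_big => [zt|zt _]; rewrite ?extends_restrict // mulrC.
Qed.
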